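(* Let $(X,d)$ be a geodesic space with $\operatorname{Curv}X\ge\kappa$ for some $\kappa\in\mathbb{R}$. Then $X$ is non-branching.
   Context: Let $(M^2_\kappa,d_\kappa)$ be the model plane of constant curvature $\kappa$. For a triangle $(a_1,a_2,a_3)$ in $X$, a comparison triangle is $(\bar a_1,\bar a_2,\bar a_3)$ in $M^2_\kappa$ with $d_\kappa(\bar a_i,\bar a_j)=d(a_i,a_j)$. The circumradius is $r(a_1,a_2,a_3)=\inf_{x\in X}\max_i d(x,a_i)$, and $r(\bar a_1,\bar a_2,\bar a_3)=\inf_{x\in M^2_\kappa}\max_i d_\kappa(x,\bar a_i)$. $\operatorname{Curv}X\ge\kappa$ means $r(a_1,a_2,a_3)\ge r(\bar a_1,\bar a_2,\bar a_3)$ for all triangles in $X$ (for $\kappa>0$ only for triangles whose comparison triangle lies in some ball of radius $\frac{\pi}{2\sqrt\kappa}$). For $t\in[0,1]$ let $Z_t(x,y)=\{z\in X: d(x,z)=t\,d(x,y),\ d(z,y)=(1-t)d(x,y)\}$. A geodesic space is non-branching if for all $x,y,y'\in X$ with $d(x,y)=d(x,y')$, the condition $Z_t(x,y)\cap Z_t(x,y')\neq\emptyset$ for some $t\in(0,1)$ implies $y=y'$. *)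

From Stdlib Require Import Reals Lra.
From Coquelicot Require Import Coquelicot.
Open Scope R_scope.

Definition is_metric {X : Type} (d : X -> X -> R) : Prop :=
  (forall x y, 0 <= d x y) /\
  (forall x y, d x y = 0 <-> x = y) /\
  (forall x y, d x y = d y x) /\
  (forall x y z, d x z <= d x y + d y z).

Definition is_geodesic_space {X : Type} (d : X -> X -> R) : Prop :=
  forall x y : X, exists gamma : R -> X,
    gamma 0 = x /\ gamma (d x y) = y /\
    forall s t, 0 <= s <= d x y -> 0 <= t <= d x y ->
      d (gamma s) (gamma t) = Rabs (s - t).

Definition Zt {X : Type} (d : X -> X -> R) (t : R) (x y : X) (z : X) : Prop :=
  d x z = t * d x y /\ d z y = (1 - t) * d x y.

Definition non_branching {X : Type} (d : X -> X -> R) : Prop :=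
  forall x y y' : X, d x y = d x y' ->
    (exists t, 0 < t < 1 /\ exists z, Zt d t x y z /\ Zt d t x y' z) ->
    y = y'.

Definition R3 : Type := (R * R * R)%type.

Definition p0 (p : R3) : R := fst (fst p).
Definition p1 (p : R3) : R := snd (fst p).
Definition p2 (p : R3) : R := snd p.

Definition euclid_dot (p q : R3) : R := p0 p * p0 q + p1 p * p1 q + p2 p * p2 q.
Definition lorentz_dot (p q : R3) : R := p0 p * p0 q - p1 p * p1 q - p2 p * p2 q.

(** kappa = 0: the plane {p2 = 0};
    kappa > 0: sphere of radius 1/sqrt kappa;
    kappa < 0: upper sheet of the hyperboloid <p,p>_L = 1/(-kappa). *)
Definition on_model (kappa : R) (p : R3) : Prop :=
  if Rlt_dec 0 kappa then euclid_dot p p = / kappa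
  else if Rlt_dec kappa 0 then lorentz_dot p p = / (- kappa) /\ 0 < p0 p
  else p2 p = 0.

Definition arcosh (t : R) : R := ln (t + sqrt (t * t - 1)).

Definition model_dist (kappa : R) (p q : R3) : R :=
  if Rlt_dec 0 kappa then / sqrt kappa * acos (kappa * euclid_dot p q)
  else if Rlt_dec kappa 0 then / sqrt (- kappa) * arcosh ((- kappa) * lorentz_dot p q)
  else sqrt ((p0 p - p0 q) ^ 2 + (p1 p - p1 q) ^ 2).

Definition Mk (kappa : R) : Type := { p : R3 | on_model kappa p }.
Definition dk (kappa : R) (a b : Mk kappa) : R := model_dist kappa (proj1_sig a) (proj1_sig b).

Definition max3 (u v w : R) : R := Rmax u (Rmax v w).

Definition circumradius {X : Type} (d : X -> X -> R) (a1 a2 a3 : X) : Rbar :=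
  Glb_Rbar (fun r => exists x : X, r = max3 (d x a1) (d x a2) (d x a3)).

Definition curv_ge {X : Type} (d : X -> X -> R) (kappa : R) : Prop :=
  forall (a1 a2 a3 : X) (b1 b2 b3 : Mk kappa),
    dk kappa b1 b2 = d a1 a2 ->
    dk kappa b1 b3 = d a1 a3 ->
    dk kappa b2 b3 = d a2 a3 ->
    (0 < kappa -> exists c : Mk kappa,
        dk kappa c b1 < PI / (2 * sqrt kappa) /\
        dk kappa c b2 < PI / (2 * sqrt kappa) /\
        dk kappa c b3 < PI / (2 * sqrt kappa)) ->
    Rbar_le (circumradius (dk kappa) b1 b2 b3) (circumradius d a1 a2 a3).

(* Suppose geodesics from x to y and to y' share a point z at distance S > 0 from x.
   Take p on [z, x] and u, u' on [z, y], [z, y'] at a small distance s from z. Then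
   d(p, u) = d(p, u') = 2s and z is within s of p, u, u', so the triangle (p, u, u') has
   circumradius at most s. In each model plane, however, a triangle with two sides 2s and
   base D > 0 has circumradius > s: a centre within r of the three vertices forces D to
   be small as r tends to s. Hence d(u, u') = 0, i.e. the geodesics still agree at
   distance S + s, and advancing by steps of bounded length yields y = y'. *)

From Stdlib Require Import Reals Lra Classical.
From Coquelicot Require Import Coquelicot.
Open Scope R_scope.
Set Bullet Behavior "Strict Subproofs".

(** * Circumradius *)

Lemma circumradius_le {X : Type} (d : X -> X -> R) (a1 a2 a3 x : X) :
  Rbar_le (circumradius d a1 a2 a3) (max3 (d x a1) (d x a2) (d x a3)).
Proof.
  destruct (Glb_Rbar_correct (fun r => exists x, r = max3 (d x a1) (d x a2) (d x a3)))
    as [Hlb _].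
  apply Hlb; eauto.
Qed.

Lemma circumradius_le_center {X : Type} (d : X -> X -> R) (a1 a2 a3 : X) (s eps : R) :
  Rbar_le (circumradius d a1 a2 a3) (Finite s) -> 0 < eps ->
  exists c, d c a1 < s + eps /\ d c a2 < s + eps /\ d c a3 < s + eps.
Proof.
  intros Hle Heps. apply NNPP; intro Hfar.
  assert (Hlb : is_lb_Rbar (fun r => exists x, r = max3 (d x a1) (d x a2) (d x a3))
                  (s + eps)).
  { intros r [x ->]. simpl. unfold max3.
    apply Rnot_lt_le; intro Hlt. apply Hfar. exists x.
    apply Rmax_Rlt in Hlt as [H1 H23]. apply Rmax_Rlt in H23 as [H2 H3]. auto. }
  pose proof (Rbar_le_trans _ _ _ (proj2 (Glb_Rbar_correct _) _ Hlb) Hle) as H.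
  simpl in H. lra.
Qed.

Lemma circumradius_gt {M : Type} (d : M -> M -> R) (b1 b2 b3 : M)
    (s rho delta : R) (F : R -> R) :
  0 < rho -> 0 < delta -> continuity_pt F s -> F s = 0 ->
  (forall c r, s < r < s + rho -> d c b1 < r -> d c b2 < r -> d c b3 < r -> delta < F r) ->
  ~ Rbar_le (circumradius d b1 b2 b3) (Finite s).
Proof.
  intros Hrho Hdelta HF HF0 Hbound Hle.
  destruct (HF delta Hdelta) as (eta & Heta & Hnear).
  set (eps := Rmin rho eta / 2).
  assert (Heps : 0 < eps /\ eps < rho /\ eps < eta).
  { pose proof (Rmin_l rho eta). pose proof (Rmin_r rho eta).
    pose proof (Rmin_pos rho eta Hrho Heta). unfold eps. lra. }
  destruct (circumradius_le_center d b1 b2 b3 s eps Hle) as (c & H1 & H2 & H3); [lra|].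
  specialize (Hbound c (s + eps) ltac:(lra) H1 H2 H3).
  assert (Hclose : Rabs (F (s + eps) - F s) < delta).
  { apply (Hnear (s + eps)). split; [split; [exact I | lra] |].
    simpl. unfold R_dist. rewrite Rabs_right; lra. }
  rewrite HF0, Rminus_0_r in Hclose. apply Rabs_def2 in Hclose. lra.
Qed.

Definition model_isosceles (kappa s D : R) : Prop :=
  exists b1 b2 b3 : Mk kappa,
    dk kappa b1 b2 = 2 * s /\ dk kappa b1 b3 = 2 * s /\ dk kappa b2 b3 = D /\
    (0 < kappa -> exists c : Mk kappa,
        dk kappa c b1 < PI / (2 * sqrt kappa) /\
        dk kappa c b2 < PI / (2 * sqrt kappa) /\
        dk kappa c b3 < PI / (2 * sqrt kappa)) /\
    ~ Rbar_le (circumradius (dk kappa) b1 b2 b3) (Finite s).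

(** * The Euclidean plane *)

Lemma circle_point (s t : R) : 0 < s -> - s ^ 2 <= t <= s ^ 2 ->
  exists a b, a * s = t /\ a ^ 2 + b ^ 2 = s ^ 2.
Proof.
  intros Hs Ht. exists (t / s), (sqrt (s ^ 2 - (t / s) ^ 2)).
  assert (Ha : - s <= t / s <= s).
  { split; [apply (Rmult_le_reg_r s) | apply (Rmult_le_reg_r s)]; try field_simplify; nra. }
  split; [field; lra|]. rewrite pow2_sqrt by nra. ring.
Qed.

Lemma on_model_plane (u v : R) : on_model 0 (u, v, 0).
Proof.
  unfold on_model. destruct (Rlt_dec 0 0); [lra|]. destruct (Rlt_dec 0 0); [lra|].
  reflexivity.
Qed.

Definition plane_point (u v : R) : Mk 0 := exist _ (u, v, 0) (on_model_plane u v).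

Lemma dk_plane (a b : Mk 0) : dk 0 a b =
  sqrt ((p0 (proj1_sig a) - p0 (proj1_sig b)) ^ 2 + (p1 (proj1_sig a) - p1 (proj1_sig b)) ^ 2).
Proof.
  unfold dk, model_dist. destruct (Rlt_dec 0 0); [lra|]. destruct (Rlt_dec 0 0); [lra|].
  reflexivity.
Qed.

Lemma sq_lt_of_sqrt_lt (a r : R) : sqrt a < r -> a < r ^ 2.
Proof.
  intros H. destruct (Rle_lt_dec 0 a) as [Ha | Ha]; [|nra].
  pose proof (sqrt_sqrt a Ha). pose proof (sqrt_pos a). nra.
Qed.

(* For b1 = 0, b2 = (2s, 0), b3 = (u, v), c = (c0, c1): the midpoints m2, m3 of [b1,b2] and
   [b1,b3] are D/2 apart, and |c - m_i|^2 = (|c - b1|^2 + |c - b_i|^2)/2 - s^2 < r^2 - s^2. *)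
Lemma plane_center_bound (c0 c1 u v s r : R) :
  c0 ^ 2 + c1 ^ 2 < r ^ 2 -> (c0 - 2 * s) ^ 2 + c1 ^ 2 < r ^ 2 ->
  (c0 - u) ^ 2 + (c1 - v) ^ 2 < r ^ 2 -> u ^ 2 + v ^ 2 = (2 * s) ^ 2 ->
  (u - 2 * s) ^ 2 + v ^ 2 < 16 * (r ^ 2 - s ^ 2).
Proof.
  intros H1 H2 H3 Huv.
  pose proof (pow2_ge_0 (2 * c0 - s - u / 2)). pose proof (pow2_ge_0 (2 * c1 - v / 2)).
  nra.
Qed.

Lemma plane_isosceles (s D : R) : 0 < s -> 0 < D <= 2 * s -> model_isosceles 0 s D.
Proof.
  intros Hs HD.
  destruct (circle_point (2 * s) (4 * s ^ 2 - D ^ 2 / 2)) as (u & v & Hu & Huv); [lra | nra |].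
  assert (Hb3 : (u - 2 * s) ^ 2 + v ^ 2 = D ^ 2) by nra.
  exists (plane_point 0 0), (plane_point (2 * s) 0), (plane_point u v).
  rewrite !dk_plane. cbn [proj1_sig plane_point p0 p1 fst snd].
  repeat split; try (intro; lra).
  1-3: apply sqrt_lem_1; nra.
  apply (circumradius_gt _ _ _ _ s 1 (D ^ 2) (fun r => 16 * (r ^ 2 - s ^ 2)));
    [lra | nra | reg | ring |].
  intros [[[c0 c1] c2] Hc] r Hr. rewrite !dk_plane.
  cbn [proj1_sig plane_point p0 p1 fst snd].
  intros H1 H2 H3. apply sq_lt_of_sqrt_lt in H1, H2, H3.
  rewrite <- Hb3. apply (plane_center_bound c0 c1); nra.
Qed.

(** * The sphere *)

Definition scale3 (r : R) (P : R3) : R3 := (r * p0 P, r * p1 P, r * p2 P).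

Lemma scale3_scale3_inv (r : R) (P : R3) : r <> 0 -> scale3 r (scale3 (/ r) P) = P.
Proof.
  intros Hr. destruct P as [[a b] c]. unfold scale3, p0, p1, p2; simpl.
  f_equal; [f_equal|]; field; exact Hr.
Qed.

Lemma euclid_dot_scale3 (r q : R) (P Q : R3) :
  euclid_dot (scale3 r P) (scale3 q Q) = r * q * euclid_dot P Q.
Proof. unfold euclid_dot, scale3, p0, p1, p2; simpl. ring. Qed.

Lemma euclid_dot_unit_bound (P Q : R3) :
  euclid_dot P P = 1 -> euclid_dot Q Q = 1 -> -1 <= euclid_dot P Q <= 1.
Proof.
  unfold euclid_dot. intros HP HQ.
  pose proof (pow2_ge_0 (p0 P - p0 Q)). pose proof (pow2_ge_0 (p1 P - p1 Q)).
  pose proof (pow2_ge_0 (p2 P - p2 Q)). pose proof (pow2_ge_0 (p0 P + p0 Q)).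
  pose proof (pow2_ge_0 (p1 P + p1 Q)). pose proof (pow2_ge_0 (p2 P + p2 Q)).
  split; nra.
Qed.

(* With M := 2kC the identity 2|M-B1-B2|^2 + 2|M-B1-B3|^2 - |B2-B3|^2 = |2M-2B1-B2-B3|^2
   holds, and |M-B1-Bi|^2 = 8k^2 - 4k(C.B1 + C.Bi) < 8k(k - cb). *)
Lemma sphere_center_bound (B1 B2 B3 C : R3) (k cb cd : R) :
  euclid_dot C C = 1 -> euclid_dot B1 B1 = 1 -> euclid_dot B2 B2 = 1 ->
  euclid_dot B3 B3 = 1 ->
  euclid_dot B1 B2 = 2 * k ^ 2 - 1 -> euclid_dot B1 B3 = 2 * k ^ 2 - 1 ->
  euclid_dot B2 B3 = cd -> 0 < k ->
  cb < euclid_dot C B1 -> cb < euclid_dot C B2 -> cb < euclid_dot C B3 ->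
  2 - 2 * cd < 32 * k * (k - cb).
Proof.
  unfold euclid_dot.
  destruct B1 as [[x0 x1] x2], B2 as [[y0 y1] y2], B3 as [[z0 z1] z2], C as [[c0 c1] c2].
  unfold p0, p1, p2; simpl. intros HC H1 H2 H3 H12 H13 H23 Hk Hc1 Hc2 Hc3.
  assert (Hpar : (y0 - z0) ^ 2 + (y1 - z1) ^ 2 + (y2 - z2) ^ 2 <=
    2 * ((2 * k * c0 - x0 - y0) ^ 2 + (2 * k * c1 - x1 - y1) ^ 2 + (2 * k * c2 - x2 - y2) ^ 2)
    + 2 * ((2 * k * c0 - x0 - z0) ^ 2 + (2 * k * c1 - x1 - z1) ^ 2
           + (2 * k * c2 - x2 - z2) ^ 2)).
  { pose proof (pow2_ge_0 (4 * k * c0 - 2 * x0 - y0 - z0)).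
    pose proof (pow2_ge_0 (4 * k * c1 - 2 * x1 - y1 - z1)).
    pose proof (pow2_ge_0 (4 * k * c2 - 2 * x2 - y2 - z2)). nra. }
  nra.
Qed.

Lemma sphere_isosceles_vectors (al de : R) :
  0 < al -> 4 * al <= PI -> 0 < de <= 2 * al ->
  exists B1 B2 B3 : R3,
    euclid_dot B1 B1 = 1 /\ euclid_dot B2 B2 = 1 /\ euclid_dot B3 B3 = 1 /\
    euclid_dot B1 B2 = cos (2 * al) /\ euclid_dot B1 B3 = cos (2 * al) /\
    euclid_dot B2 B3 = cos de.
Proof.
  intros Hal Hpi Hde. pose proof PI_RGT_0.
  set (c := cos (2 * al)). set (s := sin (2 * al)).
  assert (Hs : 0 < s) by (apply sin_gt_0; lra).
  assert (Hcs : s ^ 2 + c ^ 2 = 1).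
  { pose proof (sin2_cos2 (2 * al)). unfold Rsqr in *. unfold s, c. lra. }
  assert (Hlow : c ^ 2 - s ^ 2 <= cos de).
  { replace (c ^ 2 - s ^ 2) with (cos (2 * (2 * al))) by (unfold c, s; rewrite cos_2a; ring).
    left. apply cos_decreasing_1; lra. }
  assert (Hup : cos de <= 1) by apply COS_bound.
  destruct (circle_point s (cos de - c ^ 2)) as (a & b & Ha & Hab); [lra | lra |].
  exists (1, 0, 0), (c, s, 0), (c, a, b).
  unfold euclid_dot, p0, p1, p2; simpl. repeat split; nra.
Qed.

Section Sphere.
Variable kappa : R.
Hypothesis Hkappa : 0 < kappa.

Let lam := sqrt kappa.

Let lam_pos : 0 < lam.
Proof. apply sqrt_lt_R0, Hkappa. Qed.

Let lam_sq : lam * lam = kappa.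
Proof. apply sqrt_sqrt. lra. Qed.

Lemma on_model_sphere (P : R3) : euclid_dot P P = 1 -> on_model kappa (scale3 (/ lam) P).
Proof.
  intros HP. unfold on_model. destruct (Rlt_dec 0 kappa); [|lra].
  rewrite euclid_dot_scale3, HP, <- lam_sq. pose proof lam_pos. field. lra.
Qed.

Definition sphere_point (P : R3) (HP : euclid_dot P P = 1) : Mk kappa :=
  exist _ (scale3 (/ lam) P) (on_model_sphere P HP).

Lemma dk_sphere (a b : Mk kappa) : dk kappa a b =
  / lam * acos (euclid_dot (scale3 lam (proj1_sig a)) (scale3 lam (proj1_sig b))).
Proof.
  unfold dk, model_dist. destruct (Rlt_dec 0 kappa); [|lra].
  rewrite euclid_dot_scale3, lam_sq. reflexivity.
Qed.

Lemma sphere_unit (a : Mk kappa) :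
  euclid_dot (scale3 lam (proj1_sig a)) (scale3 lam (proj1_sig a)) = 1.
Proof.
  destruct a as [a Ha]. simpl. unfold on_model in Ha.
  destruct (Rlt_dec 0 kappa); [|lra].
  rewrite euclid_dot_scale3, Ha, lam_sq. field. lra.
Qed.

Lemma dk_sphere_point (a : Mk kappa) (P : R3) (HP : euclid_dot P P = 1) :
  dk kappa a (sphere_point P HP) = / lam * acos (euclid_dot (scale3 lam (proj1_sig a)) P).
Proof.
  rewrite dk_sphere. simpl. rewrite scale3_scale3_inv; [reflexivity|].
  pose proof lam_pos. lra.
Qed.

Lemma sphere_dot_gt (a : Mk kappa) (P : R3) (HP : euclid_dot P P = 1) (r : R) :
  0 <= lam * r <= PI -> dk kappa a (sphere_point P HP) < r ->
  cos (lam * r) < euclid_dot (scale3 lam (proj1_sig a)) P.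
Proof.
  intros Hr Hlt. rewrite dk_sphere_point in Hlt. pose proof lam_pos.
  set (x := euclid_dot (scale3 lam (proj1_sig a)) P) in *.
  assert (Hx : -1 <= x <= 1) by (apply euclid_dot_unit_bound; [apply sphere_unit | exact HP]).
  assert (Hacos : acos x < lam * r).
  { apply Rmult_lt_compat_l with (r := lam) in Hlt; [|lra].
    rewrite <- Rmult_assoc, Rinv_r, Rmult_1_l in Hlt; lra. }
  rewrite <- (cos_acos x Hx). pose proof (acos_bound x).
  apply cos_decreasing_1; lra.
Qed.

Lemma sphere_isosceles (s D : R) :
  0 < s -> 0 < D <= 2 * s -> s * lam < PI / 4 -> model_isosceles kappa s D.
Proof.
  intros Hs HD Hsmall. pose proof lam_pos. pose proof PI_RGT_0.
  set (k := cos (lam * s)).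
  assert (Hk : 0 < k) by (apply cos_gt_0; nra).
  destruct (sphere_isosceles_vectors (lam * s) (lam * D)) as
    (B1 & B2 & B3 & U1 & U2 & U3 & D12 & D13 & D23); [nra | nra | nra |].
  assert (Hside : / lam * acos (cos (2 * (lam * s))) = 2 * s).
  { rewrite acos_cos by nra. field. lra. }
  exists (sphere_point B1 U1), (sphere_point B2 U2), (sphere_point B3 U3).
  rewrite !dk_sphere_point. cbn [proj1_sig sphere_point].
  rewrite !scale3_scale3_inv by lra.
  repeat split.
  - now rewrite D12.
  - now rewrite D13.
  - rewrite D23, acos_cos by nra. field. lra.
  - intros _. exists (sphere_point B1 U1).
    rewrite !dk_sphere_point. cbn [proj1_sig sphere_point].
    rewrite !scale3_scale3_inv, U1, D12, D13, Hside, acos_1 by lra.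
    assert (Hball : 2 * s < PI / (2 * lam)).
    { apply (Rmult_lt_reg_r lam); [lra|]. field_simplify; lra. }
    fold lam. lra.
  - apply (circumradius_gt _ _ _ _ s s (2 - 2 * cos (lam * D))
             (fun r => 32 * k * (k - cos (lam * r)))); [lra | | reg | unfold k; ring |].
    + assert (cos (lam * D) < 1) by (rewrite <- cos_0; apply cos_decreasing_1; nra). lra.
    + intros c r Hr H1 H2 H3.
      apply sphere_dot_gt in H1, H2, H3; try nra.
      apply (sphere_center_bound B1 B2 B3 (scale3 lam (proj1_sig c))); auto.
      * apply sphere_unit.
      * rewrite D12, cos_2a_cos. fold k. ring.
      * rewrite D13, cos_2a_cos. fold k. ring.
Qed.

End Sphere.

(** * The hyperboloid *)

Lemma lorentz_dot_sym (P Q : R3) : lorentz_dot P Q = lorentz_dot Q P.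
Proof. unfold lorentz_dot. ring. Qed.

Lemma lorentz_dot_scale3 (r q : R) (P Q : R3) :
  lorentz_dot (scale3 r P) (scale3 q Q) = r * q * lorentz_dot P Q.
Proof. unfold lorentz_dot, scale3, p0, p1, p2; simpl. ring. Qed.

Lemma discriminant_nonneg_of_nonpos (A B C : R) :
  (forall a b, a ^ 2 * A + 2 * a * b * C + b ^ 2 * B <= 0) -> C ^ 2 <= A * B.
Proof.
  intros Hq. pose proof (Hq 1 0) as HA. pose proof (Hq (- C) A) as HAC.
  destruct (Req_dec A 0) as [-> | HA0]; [|nra].
  destruct (Req_dec C 0) as [-> | HC0]; [lra|].
  specialize (Hq ((1 - B) / (2 * C)) 1).
  replace (((1 - B) / (2 * C)) ^ 2 * 0 + 2 * ((1 - B) / (2 * C)) * 1 * C + 1 ^ 2 * B)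
    with 1 in Hq by (field; exact HC0).
  lra.
Qed.

(* The orthogonal complement of a unit timelike vector is spacelike, so the Lorentz form
   is negative semidefinite there. *)
Lemma lorentz_cauchy_schwarz_orth (Q V W : R3) :
  lorentz_dot Q Q = 1 -> lorentz_dot V Q = 0 -> lorentz_dot W Q = 0 ->
  lorentz_dot V W ^ 2 <= lorentz_dot V V * lorentz_dot W W.
Proof.
  unfold lorentz_dot.
  destruct Q as [[q0 q1] q2], V as [[v0 v1] v2], W as [[w0 w1] w2].
  unfold p0, p1, p2; simpl. intros HQ HV HW.
  apply discriminant_nonneg_of_nonpos. intros a b.
  set (u0 := a * v0 + b * w0). set (u1 := a * v1 + b * w1). set (u2 := a * v2 + b * w2).
  assert (Hu : u0 * q0 = u1 * q1 + u2 * q2).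
  { assert (u0 * q0 - u1 * q1 - u2 * q2 =
            a * (v0 * q0 - v1 * q1 - v2 * q2) + b * (w0 * q0 - w1 * q1 - w2 * q2))
      by (unfold u0, u1, u2; ring).
    rewrite HV, HW in H. lra. }
  assert (Hcs : (u1 * q1 + u2 * q2) ^ 2 <= (u1 ^ 2 + u2 ^ 2) * (q1 ^ 2 + q2 ^ 2)).
  { pose proof (pow2_ge_0 (u1 * q2 - u2 * q1)).
    replace ((u1 ^ 2 + u2 ^ 2) * (q1 ^ 2 + q2 ^ 2))
      with ((u1 * q1 + u2 * q2) ^ 2 + (u1 * q2 - u2 * q1) ^ 2) by ring.
    lra. }
  assert (Hsp : u0 ^ 2 <= u1 ^ 2 + u2 ^ 2).
  { apply (Rmult_le_reg_l (q0 ^ 2)); [nra|]. rewrite <- Hu in Hcs. nra. }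
  replace (a ^ 2 * (v0 * v0 - v1 * v1 - v2 * v2) + 2 * a * b * (v0 * w0 - v1 * w1 - v2 * w2)
           + b ^ 2 * (w0 * w0 - w1 * w1 - w2 * w2))
    with (u0 ^ 2 - u1 ^ 2 - u2 ^ 2) by (unfold u0, u1, u2; ring).
  lra.
Qed.

Definition lincomb (a : R) (P : R3) (b : R) (Q : R3) : R3 :=
  (a * p0 P + b * p0 Q, a * p1 P + b * p1 Q, a * p2 P + b * p2 Q).

Lemma lorentz_dot_lincomb_l (a b : R) (P Q W : R3) :
  lorentz_dot (lincomb a P b Q) W = a * lorentz_dot P W + b * lorentz_dot Q W.
Proof. unfold lorentz_dot, lincomb, p0, p1, p2; simpl. ring. Qed.

Lemma lorentz_dot_lincomb_r (a b : R) (P Q W : R3) :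
  lorentz_dot W (lincomb a P b Q) = a * lorentz_dot W P + b * lorentz_dot W Q.
Proof. unfold lorentz_dot, lincomb, p0, p1, p2; simpl. ring. Qed.

Lemma lorentz_dot_ge_1 (P Q : R3) :
  lorentz_dot P P = 1 -> lorentz_dot Q Q = 1 -> 0 < p0 P -> 0 < p0 Q ->
  1 <= lorentz_dot P Q.
Proof.
  unfold lorentz_dot. destruct P as [[x0 x1] x2], Q as [[y0 y1] y2].
  unfold p0, p1, p2; simpl. intros HP HQ Hx Hy.
  assert (Hsq : (1 + x1 * y1 + x2 * y2) ^ 2 <= (x0 * y0) ^ 2).
  { replace ((x0 * y0) ^ 2) with ((1 + x1 ^ 2 + x2 ^ 2) * (1 + y1 ^ 2 + y2 ^ 2)) by nra.
    pose proof (pow2_ge_0 (x1 * y2 - x2 * y1)).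
    pose proof (pow2_ge_0 (x1 - y1)). pose proof (pow2_ge_0 (x2 - y2)). nra. }
  assert (0 < x0 * y0) by (apply Rmult_lt_0_compat; assumption).
  destruct (Rle_lt_dec (1 + x1 * y1 + x2 * y2) (x0 * y0)); [lra | nra].
Qed.

(* cosh d(P,S) <= cosh (d(P,Q) + d(Q,S)) <= 2 cosh d(P,Q) cosh d(Q,S) - 1, obtained by
   Cauchy-Schwarz on the components of P and S orthogonal to Q. *)
Lemma lorentz_dot_triangle (P Q S : R3) (a b : R) :
  lorentz_dot Q Q = 1 -> lorentz_dot P P = 1 -> lorentz_dot S S = 1 ->
  lorentz_dot P Q = a -> lorentz_dot Q S = b -> 1 <= a * b ->
  lorentz_dot P S <= 2 * a * b - 1.
Proof.
  intros HQ HP HS Ha Hb Hab.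
  rewrite lorentz_dot_sym in Hb.
  set (V := lincomb 1 P (- a) Q). set (W := lincomb 1 S (- b) Q).
  assert (HV : lorentz_dot V Q = 0) by (unfold V; rewrite lorentz_dot_lincomb_l, HQ, Ha; ring).
  assert (HW : lorentz_dot W Q = 0) by (unfold W; rewrite lorentz_dot_lincomb_l, HQ, Hb; ring).
  pose proof (lorentz_cauchy_schwarz_orth Q V W HQ HV HW) as Hcs.
  unfold V, W in Hcs.
  rewrite !lorentz_dot_lincomb_l, !lorentz_dot_lincomb_r in Hcs.
  rewrite (lorentz_dot_sym Q P), (lorentz_dot_sym Q S) in Hcs.
  rewrite HP, HQ, HS, Ha, Hb in Hcs.
  set (x := lorentz_dot P S) in *.
  replace ((1 * (1 * x + - b * a) + - a * (1 * b + - b * 1)) ^ 2) with ((x - a * b) ^ 2)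
    in Hcs by ring.
  match type of Hcs with
  | _ <= ?r => replace r with ((1 - a ^ 2) * (1 - b ^ 2)) in Hcs by ring
  end.
  assert ((1 - a ^ 2) * (1 - b ^ 2) <= (a * b - 1) ^ 2)
    by (pose proof (pow2_ge_0 (a - b)); nra).
  destruct (Rle_lt_dec (x - a * b) (a * b - 1)) as [Hle | Hgt]; [lra|].
  assert ((a * b - 1) ^ 2 < (x - a * b) ^ 2) by nra.
  lra.
Qed.

(* M and M' are the hyperboloid midpoints of [B1,B2] and [B1,B3]; the triangle inequality
   through C bounds their distance, which is determined by cd. *)
Lemma hyperboloid_center_bound (B1 B2 B3 C : R3) (k cb cd : R) :
  lorentz_dot C C = 1 -> lorentz_dot B1 B1 = 1 -> lorentz_dot B2 B2 = 1 ->
  lorentz_dot B3 B3 = 1 ->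
  0 < p0 C -> 0 < p0 B1 -> 0 < p0 B2 -> 0 < p0 B3 ->
  lorentz_dot B1 B2 = 2 * k ^ 2 - 1 -> lorentz_dot B1 B3 = 2 * k ^ 2 - 1 ->
  lorentz_dot B2 B3 = cd -> 0 < k ->
  lorentz_dot C B1 < cb -> lorentz_dot C B2 < cb -> lorentz_dot C B3 < cb ->
  cd - 1 < 8 * (cb ^ 2 - k ^ 2).
Proof.
  intros HC H1 H2 H3 HC0 H10 H20 H30 H12 H13 H23 Hk Hc1 Hc2 Hc3.
  set (M := lincomb (/ (2 * k)) B1 (/ (2 * k)) B2).
  set (M' := lincomb (/ (2 * k)) B1 (/ (2 * k)) B3).
  assert (Hik : 0 < / (2 * k)) by (apply Rinv_0_lt_compat; lra).
  assert (HM : lorentz_dot M M = 1).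
  { unfold M. rewrite lorentz_dot_lincomb_l, !lorentz_dot_lincomb_r, (lorentz_dot_sym B2 B1).
    rewrite H1, H2, H12. field. lra. }
  assert (HM' : lorentz_dot M' M' = 1).
  { unfold M'. rewrite lorentz_dot_lincomb_l, !lorentz_dot_lincomb_r, (lorentz_dot_sym B3 B1).
    rewrite H1, H3, H13. field. lra. }
  assert (HM0 : 0 < p0 M) by (unfold M, lincomb, p0 at 1; simpl; fold (p0 B1) (p0 B2); nra).
  assert (HM0' : 0 < p0 M') by (unfold M', lincomb, p0 at 1; simpl; fold (p0 B1) (p0 B3); nra).
  assert (HMM : lorentz_dot M M' = (4 * k ^ 2 - 1 + cd) / (4 * k ^ 2)).
  { unfold M, M'. rewrite lorentz_dot_lincomb_l, !lorentz_dot_lincomb_r.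
    rewrite (lorentz_dot_sym B2 B1), H1, H12, H13, H23. field. lra. }
  assert (HMC : lorentz_dot M C * (2 * k) < 2 * cb).
  { unfold M. rewrite lorentz_dot_lincomb_l, (lorentz_dot_sym B1 C), (lorentz_dot_sym B2 C).
    field_simplify; lra. }
  assert (HCM : lorentz_dot C M' * (2 * k) < 2 * cb).
  { unfold M'. rewrite lorentz_dot_lincomb_r. field_simplify; lra. }
  assert (A1 : 1 <= lorentz_dot M C) by (apply lorentz_dot_ge_1; auto).
  assert (A2 : 1 <= lorentz_dot C M') by (apply lorentz_dot_ge_1; auto).
  pose proof (lorentz_dot_triangle M C M' _ _ HC HM HM' eq_refl eq_refl ltac:(nra)) as Htri.
  rewrite HMM in Htri.
  apply (Rmult_le_compat_r (4 * k ^ 2)) in Htri; [|nra].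
  replace ((4 * k ^ 2 - 1 + cd) / (4 * k ^ 2) * (4 * k ^ 2)) with (4 * k ^ 2 - 1 + cd)
    in Htri by (field; lra).
  assert ((lorentz_dot M C * (2 * k)) * (lorentz_dot C M' * (2 * k)) < (2 * cb) * (2 * cb))
    by (apply Rmult_le_0_lt_compat; nra).
  nra.
Qed.

Lemma cosh_sinh_sq (x : R) : cosh x ^ 2 - sinh x ^ 2 = 1.
Proof. unfold cosh, sinh. rewrite exp_Ropp. pose proof (exp_pos x). field. lra. Qed.

Lemma cosh_2x (x : R) : cosh (2 * x) = 2 * cosh x ^ 2 - 1.
Proof.
  unfold cosh. replace (2 * x) with (x + x) by ring.
  rewrite exp_plus, Ropp_plus_distr, exp_plus, !exp_Ropp. pose proof (exp_pos x). field. lra.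
Qed.

Lemma cosh_ge_1 (x : R) : 1 <= cosh x.
Proof.
  pose proof (cosh_sinh_sq x). pose proof (pow2_ge_0 (sinh x)).
  assert (0 < cosh x)
    by (unfold cosh; pose proof (exp_pos x); pose proof (exp_pos (- x)); lra).
  nra.
Qed.

Lemma sinh_nonneg (x : R) : 0 <= x -> 0 <= sinh x.
Proof.
  intros [Hx | <-]; [rewrite <- sinh_0; left; apply sinh_lt, Hx |].
  rewrite sinh_0. apply Rle_refl.
Qed.

Lemma cosh_lt (x y : R) : 0 <= x < y -> cosh x < cosh y.
Proof.
  intros Hxy. pose proof (sinh_lt x y (proj2 Hxy)). pose proof (sinh_nonneg x (proj1 Hxy)).
  pose proof (cosh_sinh_sq x). pose proof (cosh_sinh_sq y).
  pose proof (cosh_ge_1 x). pose proof (cosh_ge_1 y). nra.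
Qed.

Lemma arcosh_cosh (u : R) : 0 <= u -> arcosh (cosh u) = u.
Proof.
  intros Hu. unfold arcosh. pose proof (sinh_nonneg u Hu) as Hs.
  replace (cosh u * cosh u - 1) with (sinh u * sinh u) by (pose proof (cosh_sinh_sq u); nra).
  rewrite sqrt_square by exact Hs.
  replace (cosh u + sinh u) with (exp u) by (unfold cosh, sinh; field).
  apply ln_exp.
Qed.

Lemma arcosh_le (x y : R) : 1 <= x <= y -> arcosh x <= arcosh y.
Proof.
  intros Hxy. unfold arcosh. apply ln_le.
  - pose proof (sqrt_pos (x * x - 1)). lra.
  - apply Rplus_le_compat; [lra|]. apply sqrt_le_1; nra.
Qed.

Lemma lt_cosh_of_arcosh_lt (x b : R) : 1 <= x -> 0 <= b -> arcosh x < b -> x < cosh b.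
Proof.
  intros Hx Hb Hlt. apply Rnot_le_lt. intros Hle.
  pose proof (arcosh_le (cosh b) x (conj (cosh_ge_1 b) Hle)).
  rewrite arcosh_cosh in H by exact Hb. lra.
Qed.

Lemma hyperboloid_isosceles_vectors (al de : R) :
  0 < al -> 0 < de <= 2 * al ->
  exists B1 B2 B3 : R3,
    lorentz_dot B1 B1 = 1 /\ lorentz_dot B2 B2 = 1 /\ lorentz_dot B3 B3 = 1 /\
    0 < p0 B1 /\ 0 < p0 B2 /\ 0 < p0 B3 /\
    lorentz_dot B1 B2 = cosh (2 * al) /\ lorentz_dot B1 B3 = cosh (2 * al) /\
    lorentz_dot B2 B3 = cosh de.
Proof.
  intros Hal Hde.
  set (c := cosh (2 * al)). set (s := sinh (2 * al)).
  assert (Hs : 0 < s) by (unfold s; rewrite <- sinh_0; apply sinh_lt; lra).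
  assert (Hcs : c ^ 2 - s ^ 2 = 1) by apply cosh_sinh_sq.
  assert (Hc : 1 <= c) by apply cosh_ge_1.
  assert (Hlow : 1 <= cosh de) by apply cosh_ge_1.
  assert (Hup : cosh de <= c ^ 2 + s ^ 2).
  { replace (c ^ 2 + s ^ 2) with (cosh (2 * (2 * al))) by (rewrite cosh_2x; fold c; lra).
    left. apply cosh_lt. lra. }
  destruct (circle_point s (c ^ 2 - cosh de)) as (a & b & Ha & Hab); [lra | lra |].
  exists (1, 0, 0), (c, s, 0), (c, a, b).
  unfold lorentz_dot, p0, p1, p2; simpl. repeat split; nra.
Qed.

Section Hyperboloid.
Variable kappa : R.
Hypothesis Hkappa : kappa < 0.

Let lam := sqrt (- kappa).

Let lam_pos : 0 < lam.
Proof. apply sqrt_lt_R0. lra. Qed.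

Let lam_sq : lam * lam = - kappa.
Proof. apply sqrt_sqrt. lra. Qed.

Lemma on_model_hyperboloid (P : R3) :
  lorentz_dot P P = 1 -> 0 < p0 P -> on_model kappa (scale3 (/ lam) P).
Proof.
  intros HP HP0. pose proof lam_pos. unfold on_model.
  destruct (Rlt_dec 0 kappa); [lra|]. destruct (Rlt_dec kappa 0); [|lra]. split.
  - rewrite lorentz_dot_scale3, HP, <- lam_sq. field. lra.
  - unfold scale3, p0 at 1; simpl. fold (p0 P). apply Rmult_lt_0_compat; [|exact HP0].
    apply Rinv_0_lt_compat. lra.
Qed.

Definition hyperboloid_point (P : R3) (HP : lorentz_dot P P = 1) (HP0 : 0 < p0 P) : Mk kappa :=
  exist _ (scale3 (/ lam) P) (on_model_hyperboloid P HP HP0).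

Lemma hyperboloid_unit (a : Mk kappa) :
  lorentz_dot (scale3 lam (proj1_sig a)) (scale3 lam (proj1_sig a)) = 1 /\
  0 < p0 (scale3 lam (proj1_sig a)).
Proof.
  destruct a as [a Ha]. simpl. unfold on_model in Ha. pose proof lam_pos.
  destruct (Rlt_dec 0 kappa); [lra|]. destruct (Rlt_dec kappa 0) as [_ | ]; [|lra].
  destruct Ha as [Ha Ha0]. split.
  - rewrite lorentz_dot_scale3, Ha, lam_sq. field. lra.
  - unfold scale3, p0 at 1; simpl. fold (p0 a). nra.
Qed.

Lemma dk_hyperboloid_point (a : Mk kappa) (P : R3) HP HP0 :
  dk kappa a (hyperboloid_point P HP HP0) =
  / lam * arcosh (lorentz_dot (scale3 lam (proj1_sig a)) P).
Proof.
  pose proof lam_pos. unfold dk, model_dist.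
  destruct (Rlt_dec 0 kappa); [lra|]. destruct (Rlt_dec kappa 0); [|lra].
  simpl. rewrite <- (scale3_scale3_inv lam P) at 2 by lra.
  rewrite !lorentz_dot_scale3, lam_sq. reflexivity.
Qed.

Lemma hyperboloid_dot_lt (a : Mk kappa) (P : R3) HP HP0 (r : R) :
  0 <= r -> dk kappa a (hyperboloid_point P HP HP0) < r ->
  lorentz_dot (scale3 lam (proj1_sig a)) P < cosh (lam * r).
Proof.
  intros Hr Hlt. rewrite dk_hyperboloid_point in Hlt. pose proof lam_pos.
  destruct (hyperboloid_unit a) as [Ha Ha0].
  apply lt_cosh_of_arcosh_lt; [apply lorentz_dot_ge_1; auto | nra |].
  apply Rmult_lt_compat_l with (r := lam) in Hlt; [|lra].
  rewrite <- Rmult_assoc, Rinv_r, Rmult_1_l in Hlt; lra.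
Qed.

Lemma hyperboloid_isosceles (s D : R) : 0 < s -> 0 < D <= 2 * s -> model_isosceles kappa s D.
Proof.
  intros Hs HD. pose proof lam_pos.
  set (k := cosh (lam * s)).
  assert (Hk : 1 <= k) by apply cosh_ge_1.
  destruct (hyperboloid_isosceles_vectors (lam * s) (lam * D)) as
    (B1 & B2 & B3 & U1 & U2 & U3 & P1 & P2 & P3 & D12 & D13 & D23); [nra | nra |].
  exists (hyperboloid_point B1 U1 P1), (hyperboloid_point B2 U2 P2),
    (hyperboloid_point B3 U3 P3).
  rewrite !dk_hyperboloid_point. cbn [proj1_sig hyperboloid_point].
  rewrite !scale3_scale3_inv by lra.
  repeat split; try (intro; lra).
  - rewrite D12, arcosh_cosh by nra. field. lra.
  - rewrite D13, arcosh_cosh by nra. field. lra.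
  - rewrite D23, arcosh_cosh by nra. field. lra.
  - apply (circumradius_gt _ _ _ _ s s (cosh (lam * D) - 1)
             (fun r => 8 * (cosh (lam * r) ^ 2 - k ^ 2)));
      [lra | | unfold cosh; reg | unfold k; ring |].
    + assert (cosh 0 < cosh (lam * D)) by (apply cosh_lt; nra). rewrite cosh_0 in *. lra.
    + intros c r Hr H1 H2 H3.
      apply hyperboloid_dot_lt in H1, H2, H3; try lra.
      destruct (hyperboloid_unit c) as [Hc Hc0].
      apply (hyperboloid_center_bound B1 B2 B3 (scale3 lam (proj1_sig c))); auto; try lra.
      * rewrite D12, cosh_2x. reflexivity.
      * rewrite D13, cosh_2x. reflexivity.
Qed.

End Hyperboloid.

Lemma model_isosceles_exists (kappa s D : R) :
  0 < s -> 0 < D <= 2 * s -> (0 < kappa -> s * sqrt kappa < PI / 4) ->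
  model_isosceles kappa s D.
Proof.
  intros Hs HD Hsmall.
  destruct (Rtotal_order 0 kappa) as [Hk | [<- | Hk]].
  - exact (sphere_isosceles kappa Hk s D Hs HD (Hsmall Hk)).
  - exact (plane_isosceles s D Hs HD).
  - exact (hyperboloid_isosceles kappa Hk s D Hs HD).
Qed.

(** * Branching geodesics *)

Definition short_extensions_unique {X : Type} (d : X -> X -> R) (h : R) : Prop :=
  forall p q u u' s, 0 < s <= h ->
    d q p = s -> d q u = s -> d q u' = s -> d p u = 2 * s -> d p u' = 2 * s -> u = u'.

Lemma curv_ge_short_extensions_unique {X : Type} (d : X -> X -> R) (kappa h : R) :
  is_metric d -> curv_ge d kappa ->
  (forall s D, 0 < s <= h -> 0 < D <= 2 * s -> model_isosceles kappa s D) ->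
  short_extensions_unique d h.
Proof.
  intros (Hpos & Hzero & Hsym & Htri) Hcurv Hmodel p q u u' s Hs Hqp Hqu Hqu' Hpu Hpu'.
  destruct (Req_dec (d u u') 0) as [H0 | Hne]; [now apply Hzero|].
  assert (HD : 0 < d u u' <= 2 * s).
  { pose proof (Hpos u u'). pose proof (Htri u q u'). rewrite (Hsym u q) in *. lra. }
  destruct (Hmodel s (d u u') Hs HD) as (b1 & b2 & b3 & E12 & E13 & E23 & Hball & Hgt).
  exfalso. apply Hgt, (Rbar_le_trans _ (circumradius d p u u')).
  - apply Hcurv; [congruence | congruence | exact E23 | exact Hball].
  - pose proof (circumradius_le d p u u' q) as Hq.
    rewrite Hqp, Hqu, Hqu' in Hq. unfold max3 in Hq.
    now rewrite !(Rmax_left s s) in Hq by lra.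
Qed.

Section Branching.
Variables (X : Type) (d : X -> X -> R) (h : R).
Hypothesis Hmet : is_metric d.
Hypothesis Hgeo : is_geodesic_space d.
Hypothesis Hext : short_extensions_unique d h.

Lemma geodesic_point (a b : X) (s : R) : 0 <= s <= d a b ->
  exists w, d a w = s /\ d w b = d a b - s.
Proof.
  intros Hs. destruct (Hgeo a b) as (g & Hg0 & Hg1 & Hg).
  exists (g s). split; [rewrite <- Hg0 at 1 | rewrite <- Hg1 at 1];
    rewrite Hg, Rabs_left1 by lra; lra.
Qed.

Variables (x y y' : X).
Hypothesis Hyy' : d x y = d x y'.

Lemma common_endpoint z : d z y = 0 -> d z y' = 0 -> y = y'.
Proof.
  destruct Hmet as (_ & Hzero & _). intros Hy Hy'.
  apply Hzero in Hy, Hy'. congruence.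
Qed.

Lemma common_point_advance z S s :
  d x z = S -> d z y = d x y - S -> d z y' = d x y - S ->
  0 < s <= h -> s <= S -> s <= d x y - S ->
  exists u, d x u = S + s /\ d u y = d x y - (S + s) /\ d u y' = d x y - (S + s).
Proof.
  destruct Hmet as (Hpos & Hzero & Hsym & Htri).
  intros Hxz Hzy Hzy' Hsh HsS HsL.
  destruct (geodesic_point z y s) as (u & Hzu & Huy); [lra|].
  destruct (geodesic_point z y' s) as (u' & Hzu' & Huy'); [lra|].
  destruct (geodesic_point z x s) as (p & Hzp & Hpx); [rewrite Hsym; lra|].
  rewrite (Hsym z x), Hxz in Hpx.
  assert (Hxu : d x u = S + s).
  { pose proof (Htri x z u). pose proof (Htri x u y). lra. }
  assert (Hxu' : d x u' = S + s).
  { pose proof (Htri x z u'). pose proof (Htri x u' y'). lra. }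
  assert (Hpu : d p u = 2 * s).
  { pose proof (Htri x p u). pose proof (Htri p z u).
    rewrite (Hsym x p), (Hsym p z) in *. lra. }
  assert (Hpu' : d p u' = 2 * s).
  { pose proof (Htri x p u'). pose proof (Htri p z u').
    rewrite (Hsym x p), (Hsym p z) in *. lra. }
  pose proof (Hext p z u u' s Hsh Hzp Hzu Hzu' Hpu Hpu') as <-.
  exists u. repeat split; lra.
Qed.

Lemma common_point_eq (e : R) (n : nat) : 0 < e <= h -> forall z S,
  d x z = S -> d z y = d x y - S -> d z y' = d x y - S -> e <= S ->
  d x y - S <= INR n * e -> y = y'.
Proof.
  destruct Hmet as (Hpos & _).
  intros He. induction n as [|n IH]; intros z S Hxz Hzy Hzy' HeS Hn.
  - simpl in Hn. pose proof (Hpos z y). apply (common_endpoint z); lra.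
  - rewrite S_INR in Hn.
    destruct (Rle_lt_dec (d x y - S) e) as [Hlast | Hmore].
    + destruct (Req_dec (d x y - S) 0) as [H0 | H0]; [apply (common_endpoint z); lra|].
      pose proof (Hpos z y).
      destruct (common_point_advance z S (d x y - S)) as (u & _ & Huy & Huy'); try lra.
      apply (common_endpoint u); lra.
    + destruct (common_point_advance z S e) as (u & Hxu & Huy & Huy'); try lra.
      apply (IH u (S + e)); lra.
Qed.

End Branching.

Lemma non_branching_of_short_extensions_unique {X : Type} (d : X -> X -> R) (h : R) :
  is_metric d -> is_geodesic_space d -> 0 < h -> short_extensions_unique d h ->
  non_branching d.
Proof.
  intros Hmet Hgeo Hh Hext x y y' Hyy' (t & Ht & z & [Hxz Hzy] & [Hxz' Hzy']).
  pose proof Hmet as (Hpos & _).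
  destruct (Req_dec (d x y) 0) as [H0 | H0]; [apply (common_endpoint X d Hmet y y' x); lra|].
  pose proof (Hpos x y).
  set (e := Rmin h (t * d x y)).
  assert (He : 0 < e) by (apply Rmin_pos; nra).
  destruct (nfloor_ex (d x y / e)) as (n & _ & Hn); [apply Rdiv_le_0_compat; lra|].
  assert (HLn : d x y <= INR (S n) * e).
  { rewrite S_INR. apply Rmult_lt_compat_r with (r := e) in Hn; [|lra].
    unfold Rdiv in Hn. rewrite Rmult_assoc, Rinv_l, Rmult_1_r in Hn; lra. }
  apply (common_point_eq X d h Hmet Hgeo Hext x y y' Hyy' e (S n)) with z (t * d x y);
    try lra.
  - split; [lra | apply Rmin_l].
  - unfold e. apply Rmin_r.
  - nra.
Qed.

Theorem mainTheorem9 (X : Type) (d : X -> X -> R) (kappa : R) :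
  is_metric d -> is_geodesic_space d -> curv_ge d kappa -> non_branching d.
Proof.
  intros Hmet Hgeo Hcurv.
  set (h := PI / (8 * (sqrt kappa + 1))).
  pose proof PI_RGT_0. pose proof (sqrt_pos kappa).
  assert (Hh : h * (8 * (sqrt kappa + 1)) = PI) by (unfold h; field; lra).
  apply (non_branching_of_short_extensions_unique d h Hmet Hgeo); [nra|].
  apply (curv_ge_short_extensions_unique d kappa h Hmet Hcurv).
  intros s D Hs HD. apply model_isosceles_exists; [lra | exact HD |].
  intros _. nra.
Qed.
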